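(* Let $(f,g,h,X,U)$ be a balanced quintuple with $\operatorname{card}(X)=n\ge1$, and let $x_0\in X$ satisfy $h(x_0)\neq0$. Then there is a neighborhood of $x_0$ on which $f$ coincides with a polynomial of degree at most $n-2$ (where the zero function is regarded as a polynomial of degree $-1$; so for $n=1$ the conclusion is that $f$ vanishes near $x_0$).
   Context: Let $U\subset\mathbb{R}$ be open and $X\subset U$ a finite set with $\operatorname{card}(X)\ge1$. Let $f\colon U\to\mathbb{R}$ be continuous, $g\colon X\to\mathbb{R}$ injective, and $h\colon X\to\mathbb{R}$ arbitrary. The quintuple $(f,g,h,X,U)$ is called balanced if there is $\epsilon>0$ such that $$\sum_{x\in X} h(x)\,f\big(x+s+t\,g(x)\big)=0\quad\text{for all } s,t\in\mathbb{R} \text{ with } |s|,|t|<\epsilon.$$ *)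

From Stdlib Require Import Reals List.
From Stdlib Require Export Rtopology.
Import ListNotations.
Open Scope R_scope.

(* f continuous on U (f is given as a total function, only its values on U matter) *)
Definition continuous_on (U : R -> Prop) (f : R -> R) : Prop :=
  forall x, U x -> continuity_pt f x.

(* g injective on the finite set X (represented as a duplicate-free list) *)
Definition injective_on (X : list R) (g : R -> R) : Prop :=
  forall x y, In x X -> In y X -> g x = g y -> x = y.

Fixpoint sum_list (F : R -> R) (l : list R) : R :=
  match l with [] => 0 | a :: l' => F a + sum_list F l' end.

Definition balanced (f g h : R -> R) (X : list R) (U : R -> Prop) : Prop :=
  exists eps, 0 < eps /\
    forall s t, Rabs s < eps -> Rabs t < eps ->
      sum_list (fun x => h x * f (x + s + t * g x)) X = 0.

(* evaluation of the polynomial with coefficient list [c0; c1; ...] *)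
Fixpoint poly_eval (c : list R) (y : R) : R :=
  match c with [] => 0 | a :: c' => a + y * poly_eval c' y end.

From Stdlib Require Import Reals List Lra Lia FunctionalExtensionality FinFun ZArith.
Import ListNotations.
Open Scope R_scope.

(* Write the balanced identity as [phi0 (s + t g(x0)) + sum_j phi_j (s + t g(j)) = 0]
   with [phi_j v = h(j) f(j + v)].  Moving [(s, t)] along the direction that leaves the
   argument of [phi_j] unchanged and subtracting removes the [j]-th term and replaces
   [phi0] by a forward difference; after doing this for every [j <> x0], all
   (n-1)-fold forward differences of [f (x0 + .)] vanish near 0.  A continuous function
   whose m-fold differences of every step vanish on an interval is a polynomial with at
   most m coefficients there: subtract its interpolant at m equally spaced nodes; the
   remainder vanishes on every finer equally spaced grid, hence everywhere by
   continuity. *)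

Definition poly_size_le (k : nat) (p : R -> R) : Prop :=
  exists c, (length c <= k)%nat /\ forall y, p y = poly_eval c y.

Lemma poly_size_le_ext k p q :
  (forall y, p y = q y) -> poly_size_le k p -> poly_size_le k q.
Proof. intros Epq [c [Hc Ep]]; exists c; split; [exact Hc|]; intros y; rewrite <- Epq; auto. Qed.

Lemma poly_size_le_widen k k' p : (k <= k')%nat -> poly_size_le k p -> poly_size_le k' p.
Proof. intros Hk [c [Hc Ep]]; exists c; split; [lia | exact Ep]. Qed.

Lemma poly_size_le_horner k a r :
  poly_size_le k r -> poly_size_le (S k) (fun y => a + y * r y).
Proof. intros [c [Hc Er]]; exists (a :: c); split; [simpl; lia|]; intros y; simpl; rewrite Er; reflexivity. Qed.

Lemma poly_size_le0 p : poly_size_le 0 p -> forall y, p y = 0.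
Proof. intros [[|a c] [Hc Ep]] y; [apply Ep | simpl in Hc; lia]. Qed.

Lemma poly_size_leS_inv k p :
  poly_size_le (S k) p -> exists a r, poly_size_le k r /\ forall y, p y = a + y * r y.
Proof.
  intros [[|a c] [Hc Ep]].
  - exists 0, (fun _ => 0); split; [exists []; split; simpl; auto; lia|].
    intros y; rewrite Ep; simpl; ring.
  - exists a, (poly_eval c); split; [exists c; split; [simpl in Hc; lia | auto] | exact Ep].
Qed.

Lemma poly_size_le_zero k : poly_size_le k (fun _ => 0).
Proof. exists []; split; simpl; [lia | reflexivity]. Qed.

Lemma poly_size_le_add k p q :
  poly_size_le k p -> poly_size_le k q -> poly_size_le k (fun y => p y + q y).
Proof.
  revert p q; induction k as [|k IH]; intros p q Hp Hq.
  - apply (poly_size_le_ext _ (fun _ => 0)); [|apply poly_size_le_zero].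
    intros y; rewrite (poly_size_le0 p Hp), (poly_size_le0 q Hq); ring.
  - destruct (poly_size_leS_inv _ _ Hp) as [a [r [Hr Ep]]].
    destruct (poly_size_leS_inv _ _ Hq) as [b [s [Hs Eq]]].
    apply (poly_size_le_ext _ (fun y => (a + b) + y * (r y + s y))).
    + intros y; rewrite Ep, Eq; ring.
    + apply poly_size_le_horner, IH; assumption.
Qed.

Lemma poly_size_le_scale k a p : poly_size_le k p -> poly_size_le k (fun y => a * p y).
Proof.
  intros [c [Hc Ep]]; exists (map (Rmult a) c); split; [rewrite length_map; exact Hc|].
  intros y; rewrite Ep; clear Ep Hc; induction c as [|b c IHc]; simpl; [ring|].
  rewrite <- IHc; ring.
Qed.

Lemma poly_size_le_shift k p d : poly_size_le k p -> poly_size_le k (fun y => p (y + d)).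
Proof.
  revert p; induction k as [|k IH]; intros p Hp.
  - apply (poly_size_le_ext _ (fun _ => 0)); [|apply poly_size_le_zero].
    intros y; rewrite (poly_size_le0 p Hp); reflexivity.
  - destruct (poly_size_leS_inv _ _ Hp) as [a [r [Hr Ep]]].
    apply (poly_size_le_ext _ (fun y => d * r (y + d) + (a + y * r (y + d)))).
    + intros y; rewrite Ep; ring.
    + apply poly_size_le_add.
      * apply (poly_size_le_widen k); [lia|]; apply poly_size_le_scale, IH, Hr.
      * apply poly_size_le_horner, IH, Hr.
Qed.

(* Shifting [b] to the origin makes the constant coefficient [p b = 0]. *)
Lemma poly_size_le_factor_root k p b :
  poly_size_le (S k) p -> p b = 0 ->
  exists q, poly_size_le k q /\ forall y, p y = (y - b) * q y.
Proof.
  intros Hp Hb.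
  destruct (poly_size_leS_inv _ _ (poly_size_le_shift _ _ b Hp)) as [a [r [Hr Er]]].
  exists (fun y => r (y + - b)); split; [apply poly_size_le_shift, Hr|].
  assert (Ha : a = 0) by (specialize (Er 0); rewrite Rplus_0_l, Hb in Er; lra).
  intros y; specialize (Er (y - b)); replace (y - b + b) with y in Er by ring.
  rewrite Er, Ha; unfold Rminus; ring.
Qed.

Lemma poly_size_le_roots_eq0 (pts : list R) p :
  NoDup pts -> poly_size_le (length pts) p -> (forall x, In x pts -> p x = 0) ->
  forall y, p y = 0.
Proof.
  revert p; induction pts as [|b pts IH]; intros p Hnd Hp Hz y.
  - exact (poly_size_le0 p Hp y).
  - apply NoDup_cons_iff in Hnd as [Hb Hnd].
    destruct (poly_size_le_factor_root _ p b Hp (Hz b (or_introl eq_refl))) as [q [Hq Eq]].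
    rewrite Eq, (IH q Hnd Hq); [ring|].
    intros x Hx; specialize (Hz x (or_intror Hx)); rewrite Eq in Hz.
    destruct (Rmult_integral _ _ Hz) as [Hxb|]; [|assumption].
    exfalso; apply Hb; replace b with x by lra; exact Hx.
Qed.

Lemma poly_interpolation (pts : list R) (phi : R -> R) :
  NoDup pts -> exists p, poly_size_le (length pts) p /\ forall x, In x pts -> p x = phi x.
Proof.
  revert phi; induction pts as [|b pts IH]; intros phi Hnd.
  - exists (fun _ => 0); split; [apply poly_size_le_zero | intros x []].
  - apply NoDup_cons_iff in Hnd as [Hb Hnd].
    destruct (IH (fun x => (phi x - phi b) / (x - b)) Hnd) as [q [Hq Eq]].
    exists (fun y => phi b + (y - b) * q y); split.
    + apply (poly_size_le_ext _ (fun y => (phi b + y * q y) + (- b) * q y)); [intros; ring|].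
      apply poly_size_le_add; [apply poly_size_le_horner, Hq|].
      apply (poly_size_le_widen (length pts)); [simpl; lia | apply poly_size_le_scale, Hq].
    + intros x [<-|Hx]; [ring|].
      assert (x - b <> 0) by (intro; apply Hb; replace b with x by lra; exact Hx).
      rewrite Eq by exact Hx; field; assumption.
Qed.

Lemma poly_size_le_continuity_pt k p y : poly_size_le k p -> continuity_pt p y.
Proof.
  intros [c [_ Ep]].
  replace p with (poly_eval c) by (extensionality z; symmetry; apply Ep).
  clear Ep; induction c as [|a c IH]; simpl.
  - apply continuity_pt_const; intros u v; reflexivity.
  - apply (continuity_pt_plus (fct_cte a) (mult_fct id (poly_eval c))).
    + apply continuity_pt_const; intros u v; reflexivity.
    + apply continuity_pt_mult; [apply derivable_continuous_pt, derivable_pt_id | exact IH].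
Qed.

Definition fdiff (d : R) (F : R -> R) (y : R) : R := F (y + d) - F y.

Fixpoint fdiff_iter (m : nat) (d : R) (F : R -> R) : R -> R :=
  match m with O => F | S m => fdiff_iter m d (fdiff d F) end.

Lemma fdiff_iter_scale m d a F y :
  fdiff_iter m d (fun v => a * F v) y = a * fdiff_iter m d F y.
Proof.
  revert F; induction m as [|m IH]; intros F; simpl; [reflexivity|].
  rewrite <- IH; f_equal; extensionality v; unfold fdiff; ring.
Qed.

Lemma fdiff_iter_sub m d F G y :
  fdiff_iter m d (fun v => F v - G v) y = fdiff_iter m d F y - fdiff_iter m d G y.
Proof.
  revert F G; induction m as [|m IH]; intros F G; simpl; [reflexivity|].
  rewrite <- IH; f_equal; extensionality v; unfold fdiff; ring.
Qed.

Lemma poly_size_le_fdiff k p d : poly_size_le (S k) p -> poly_size_le k (fdiff d p).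
Proof.
  revert p; induction k as [|k IH]; intros p Hp;
    destruct (poly_size_leS_inv _ _ Hp) as [a [r [Hr Ep]]]; unfold fdiff.
  - apply (poly_size_le_ext _ (fun _ => 0)); [|apply poly_size_le_zero].
    intros y; rewrite !Ep, !(poly_size_le0 r Hr); ring.
  - apply (poly_size_le_ext _ (fun y => d * r (y + d) + (0 + y * fdiff d r y))).
    + intros y; rewrite !Ep; unfold fdiff; ring.
    + apply poly_size_le_add; [apply poly_size_le_scale, poly_size_le_shift, Hr|].
      apply poly_size_le_horner, IH, Hr.
Qed.

Lemma fdiff_iter_poly m d p y : poly_size_le m p -> fdiff_iter m d p y = 0.
Proof.
  revert p; induction m as [|m IH]; intros p Hp; simpl.
  - exact (poly_size_le0 p Hp y).
  - apply IH, poly_size_le_fdiff, Hp.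
Qed.

Definition fdiff_vanish_on (m : nat) (a b : R) (F : R -> R) : Prop :=
  forall d y, 0 < d -> a <= y -> y + INR m * d <= b -> fdiff_iter m d F y = 0.

Lemma fdiff_vanish_on_sub_poly m a b F p :
  fdiff_vanish_on m a b F -> poly_size_le m p -> fdiff_vanish_on m a b (fun y => F y - p y).
Proof.
  intros HF Hp d y Hd Ha Hb.
  rewrite fdiff_iter_sub, (HF d y Hd Ha Hb), fdiff_iter_poly by exact Hp; ring.
Qed.

Lemma fdiff_iter_vanish_grid m phi a b d :
  0 < d ->
  (forall y, a <= y -> y + INR m * d <= b -> fdiff_iter m d phi y = 0) ->
  (forall k, (k < m)%nat -> phi (a + INR k * d) = 0) ->
  forall k, a + INR k * d <= b -> phi (a + INR k * d) = 0.
Proof.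
  revert phi b; induction m as [|m IH]; intros phi b Hd Hdiff Hz k Hk.
  - apply Hdiff; [pose proof (pos_INR k); nra | simpl; lra].
  - assert (Hnext : forall k, a + INR k * d <= b - d -> fdiff d phi (a + INR k * d) = 0).
    { apply IH; [exact Hd | |].
      - intros y Ha Hb; apply Hdiff; [exact Ha | rewrite S_INR; lra].
      - intros k0 Hk0; unfold fdiff.
        replace (a + INR k0 * d + d) with (a + INR (S k0) * d) by (rewrite S_INR; ring).
        rewrite (Hz (S k0)), (Hz k0) by lia; ring. }
    induction k as [|k IHk]; [apply Hz; lia|].
    rewrite S_INR in Hk |- *.
    specialize (Hnext k ltac:(lra)); unfold fdiff in Hnext.
    replace (a + (INR k + 1) * d) with (a + INR k * d + d) by ring.
    rewrite IHk in Hnext by lra; lra.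
Qed.

Definition grid_nodes (a e : R) (m : nat) : list R :=
  map (fun k => a + INR k * e) (seq 0 m).

Lemma grid_nodes_NoDup a e m : 0 < e -> NoDup (grid_nodes a e m).
Proof.
  intros He; apply Injective_map_NoDup; [|apply seq_NoDup].
  intros k1 k2 E; apply INR_eq, (Rmult_eq_reg_r e); lra.
Qed.

Lemma length_grid_nodes a e m : length (grid_nodes a e m) = m.
Proof. unfold grid_nodes; rewrite length_map, length_seq; reflexivity. Qed.

Lemma In_grid_nodes a e m x :
  In x (grid_nodes a e m) <-> exists k, (k < m)%nat /\ x = a + INR k * e.
Proof.
  unfold grid_nodes; rewrite in_map_iff; split.
  - intros [k [<- Hk]]; apply in_seq in Hk; exists k; split; [lia | reflexivity].
  - intros [k [Hk ->]]; exists k; split; [reflexivity | apply in_seq; lia].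
Qed.

(* Interpolating [phi] on the fine grid gives a [q] with [phi = q] on the whole fine
   grid; the coarse nodes lie on it, so [q] has [m] roots and is zero. *)
Lemma fdiff_vanish_refined_grid m phi a b d0 :
  0 < d0 -> a + INR m * d0 <= b -> fdiff_vanish_on m a b phi ->
  (forall k, (k < m)%nat -> phi (a + INR k * d0) = 0) ->
  forall N k, (0 < N)%nat -> a + INR k * (d0 / INR N) <= b ->
    phi (a + INR k * (d0 / INR N)) = 0.
Proof.
  intros Hd0 Hb Hphi Hz N k HN Hk.
  assert (HNr : 0 < INR N) by (apply lt_0_INR; exact HN).
  set (e := d0 / INR N); assert (He : 0 < e) by (apply Rdiv_lt_0_compat; assumption).
  destruct (poly_interpolation (grid_nodes a e m) phi (grid_nodes_NoDup a e m He))
    as [q [Hq Eq]]; rewrite length_grid_nodes in Hq.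
  assert (Hfine : forall k, a + INR k * e <= b -> phi (a + INR k * e) - q (a + INR k * e) = 0).
  { apply (fdiff_iter_vanish_grid m (fun v => phi v - q v) a b e He).
    - intros y Ha Hy; apply (fdiff_vanish_on_sub_poly m a b phi q Hphi Hq); assumption.
    - intros k0 Hk0; rewrite Eq by (apply In_grid_nodes; exists k0; auto); ring. }
  assert (Hq0 : forall y, q y = 0).
  { apply (poly_size_le_roots_eq0 (grid_nodes a d0 m)); [apply grid_nodes_NoDup, Hd0 | |].
    - rewrite length_grid_nodes; exact Hq.
    - intros x Hx; apply In_grid_nodes in Hx as [k0 [Hk0 ->]].
      assert (Ecoarse : a + INR k0 * d0 = a + INR (k0 * N) * e)
        by (unfold e; rewrite mult_INR; field; lra).
      assert (Hle : a + INR k0 * d0 <= b).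
      { apply lt_INR in Hk0; pose proof (pos_INR k0); nra. }
      specialize (Hfine (k0 * N)%nat ltac:(rewrite <- Ecoarse; exact Hle)).
      rewrite <- Ecoarse, (Hz k0 Hk0) in Hfine; lra. }
  specialize (Hfine k Hk); rewrite Hq0 in Hfine; lra.
Qed.

Lemma nat_floor_exists x : 0 <= x -> exists k : nat, INR k <= x < INR k + 1.
Proof.
  intros Hx; destruct (archimed x) as [Hup1 Hup2].
  assert (Hpos : (0 < up x)%Z) by (apply lt_IZR; lra).
  exists (Z.to_nat (up x - 1)); rewrite INR_IZR_INZ, Z2Nat.id by lia.
  rewrite minus_IZR; lra.
Qed.

Lemma refined_grid_approx a d0 y alpha :
  0 < d0 -> a <= y -> 0 < alpha ->
  exists N k, (0 < N)%nat /\ a + INR k * (d0 / INR N) <= y /\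
              y - (a + INR k * (d0 / INR N)) < alpha.
Proof.
  intros Hd0 Hy Halpha.
  destruct (nat_floor_exists (d0 / alpha)) as [n [_ Hn]];
    [apply Rlt_le, Rdiv_lt_0_compat; assumption|].
  assert (HN : 0 < INR (S n)) by (apply lt_0_INR; lia).
  set (e := d0 / INR (S n)).
  assert (He : 0 < e) by (apply Rdiv_lt_0_compat; assumption).
  assert (Hea : e < alpha).
  { unfold e; rewrite S_INR in *; apply Rmult_lt_reg_r with (INR n + 1); [lra|].
    unfold Rdiv; rewrite Rmult_assoc, Rinv_l by lra.
    apply (Rmult_lt_compat_r alpha) in Hn; [|lra].
    unfold Rdiv in Hn; rewrite Rmult_assoc, Rinv_l in Hn by lra; lra. }
  destruct (nat_floor_exists ((y - a) / e)) as [k [Hk1 Hk2]];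
    [apply Rmult_le_pos; [lra | apply Rlt_le, Rinv_0_lt_compat, He]|].
  assert (Hye : (y - a) / e * e = y - a) by (field; lra).
  exists (S n), k; split; [lia|]; fold e; split; nra.
Qed.

Lemma continuity_pt_eq0_of_approx phi y :
  continuity_pt phi y ->
  (forall alpha, 0 < alpha -> exists z, Rabs (z - y) < alpha /\ phi z = 0) ->
  phi y = 0.
Proof.
  intros Hc Happrox; destruct (Req_dec (phi y) 0) as [|Hne]; [assumption|exfalso].
  destruct (Hc (Rabs (phi y)) (Rabs_pos_lt _ Hne)) as [alpha [Halpha Hclose]].
  destruct (Happrox alpha Halpha) as [z [Hz Hz0]].
  destruct (Req_dec z y) as [->|Hzy]; [contradiction|].
  specialize (Hclose z (conj (conj I (not_eq_sym Hzy)) Hz)); simpl in Hclose.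
  unfold R_dist in Hclose; rewrite Hz0, Rminus_0_l, Rabs_Ropp in Hclose; lra.
Qed.

Lemma fdiff_vanish_on_poly m F a b :
  a < b -> (forall y, a < y < b -> continuity_pt F y) -> fdiff_vanish_on m a b F ->
  exists p, poly_size_le m p /\ forall y, a < y < b -> F y = p y.
Proof.
  intros Hab HF Hdiff; destruct m as [|m'].
  { exists (fun _ => 0); split; [apply poly_size_le_zero|].
    intros y Hy; apply (Hdiff 1 y); simpl; lra. }
  set (m := S m'); assert (Hm : 0 < INR m) by (apply lt_0_INR; lia).
  set (d0 := (b - a) / INR m).
  assert (Hd0 : 0 < d0) by (apply Rdiv_lt_0_compat; lra).
  assert (Hbd0 : a + INR m * d0 <= b) by (unfold d0; right; field; lra).
  destruct (poly_interpolation (grid_nodes a d0 m) F (grid_nodes_NoDup a d0 m Hd0))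
    as [p [Hp Ep]]; rewrite length_grid_nodes in Hp.
  exists p; split; [exact Hp|]; intros y Hy.
  enough (Hphi : F y - p y = 0) by lra.
  apply (continuity_pt_eq0_of_approx (fun v => F v - p v));
    [exact (continuity_pt_minus _ _ _ (HF y Hy) (poly_size_le_continuity_pt _ _ y Hp))|].
  intros alpha Halpha.
  destruct (refined_grid_approx a d0 y alpha Hd0 ltac:(lra) Halpha) as [N [k [HN [Hle Hlt]]]].
  exists (a + INR k * (d0 / INR N)); split; [rewrite Rabs_left1; lra|].
  apply (fdiff_vanish_refined_grid m (fun v => F v - p v) a b d0 Hd0 Hbd0); [| |exact HN|lra].
  - apply fdiff_vanish_on_sub_poly; assumption.
  - intros k0 Hk0; rewrite Ep by (apply In_grid_nodes; exists k0; auto); ring.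
Qed.

Lemma sum_list_ext F G l : (forall x, F x = G x) -> sum_list F l = sum_list G l.
Proof. intros E; induction l as [|x l IH]; simpl; [reflexivity | rewrite E, IH; reflexivity]. Qed.

Lemma sum_list_sub F G l : sum_list (fun x => F x - G x) l = sum_list F l - sum_list G l.
Proof. induction l as [|x l IH]; simpl; [ring | rewrite IH; ring]. Qed.

Lemma sum_list_app F l1 l2 : sum_list F (l1 ++ l2) = sum_list F l1 + sum_list F l2.
Proof. induction l1 as [|x l1 IH]; simpl; [ring | rewrite IH; ring]. Qed.

Definition ridge_identity (g : R -> R) (g0 : R) (L : list R)
    (phi0 : R -> R) (phi : R -> R -> R) (eps : R) : Prop :=
  forall s t, Rabs s < eps -> Rabs t < eps ->
    phi0 (s + t * g0) + sum_list (fun j => phi j (s + t * g j)) L = 0.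

(* Moving [(s, t)] by [(- tau g j, tau)] with [tau (g0 - g j) = d] leaves the
   argument of [phi j] unchanged and shifts that of [phi0] by [d]; subtracting
   the two identities removes the [j]-th term. *)
Lemma ridge_identity_fdiff g g0 j L phi0 phi eps d :
  g j <> g0 -> ridge_identity g g0 (j :: L) phi0 phi eps ->
  ridge_identity g g0 L (fdiff d phi0)
    (fun i v => phi i (v + d / (g0 - g j) * (g i - g j)) - phi i v)
    (eps - (1 + Rabs (g j)) / Rabs (g0 - g j) * Rabs d).
Proof.
  intros Hgj Hid s t Hs Ht.
  assert (Hg : g0 - g j <> 0) by (intro; apply Hgj; lra).
  assert (Hpos : 0 < Rabs (g0 - g j)) by (apply Rabs_pos_lt, Hg).
  set (tau := d / (g0 - g j)).
  assert (Htau : (1 + Rabs (g j)) / Rabs (g0 - g j) * Rabs d = Rabs tau * (1 + Rabs (g j))).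
  { unfold tau, Rdiv; rewrite Rabs_mult, Rabs_inv; field; lra. }
  rewrite Htau in Hs, Ht.
  pose proof (Rabs_pos tau); pose proof (Rabs_pos (g j)).
  assert (Hs' : Rabs (s - tau * g j) < eps).
  { pose proof (Rabs_triang s (- (tau * g j))) as Htri.
    rewrite Rabs_Ropp, Rabs_mult in Htri; unfold Rminus; nra. }
  assert (Ht' : Rabs (t + tau) < eps) by (pose proof (Rabs_triang t tau); nra).
  pose proof (Hid _ _ Hs' Ht') as Hshifted; pose proof (Hid s t ltac:(nra) ltac:(nra)) as Hbase.
  simpl in Hshifted, Hbase; unfold fdiff; rewrite sum_list_sub.
  replace (s + t * g0 + d) with (s - tau * g j + (t + tau) * g0) by (unfold tau; field; exact Hg).
  replace (s - tau * g j + (t + tau) * g j) with (s + t * g j) in Hshifted by ring.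
  rewrite (sum_list_ext _ (fun i => phi i (s - tau * g j + (t + tau) * g i)) L)
    by (intros i; cbv beta; f_equal; ring); lra.
Qed.

Lemma ridge_identity_fdiff_iter g g0 L :
  (forall j, In j L -> g j <> g0) ->
  exists C, 0 <= C /\ forall phi0 phi eps, ridge_identity g g0 L phi0 phi eps ->
    forall d u, Rabs u + C * INR (length L) * Rabs d < eps ->
      fdiff_iter (length L) d phi0 u = 0.
Proof.
  induction L as [|j L IH]; intros Hg.
  - exists 0; split; [lra|]; intros phi0 phi eps Hid d u Hu; simpl.
    specialize (Hid u 0); simpl in Hid; rewrite Rmult_0_l, !Rplus_0_r, Rabs_R0 in Hid.
    apply Hid; pose proof (Rabs_pos u); lra.
  - destruct IH as [C' [HC' HL]]; [intros i Hi; apply Hg; right; exact Hi|].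
    set (Cj := (1 + Rabs (g j)) / Rabs (g0 - g j)).
    exists (Rmax Cj C'); split; [apply (Rle_trans _ C'); [exact HC' | apply Rmax_r]|].
    intros phi0 phi eps Hid d u Hu; simpl.
    apply (HL _ _ _ (ridge_identity_fdiff g g0 j L phi0 phi eps d
                       (Hg j (or_introl eq_refl)) Hid)).
    fold Cj; simpl length in Hu; rewrite S_INR in Hu.
    assert (Hj : Cj * Rabs d <= Rmax Cj C' * Rabs d)
      by (apply Rmult_le_compat_r; [apply Rabs_pos | apply Rmax_l]).
    assert (HL' : C' * INR (length L) * Rabs d <= Rmax Cj C' * INR (length L) * Rabs d).
    { apply Rmult_le_compat_r; [apply Rabs_pos|].
      apply Rmult_le_compat_r; [apply pos_INR | apply Rmax_r]. }
    lra.
Qed.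

Lemma fdiff_vanish_near0_poly n F C eps rho :
  0 <= C -> 0 < eps -> 0 < rho ->
  (forall v, Rabs v < rho -> continuity_pt F v) ->
  (forall d u, Rabs u + C * INR n * Rabs d < eps -> fdiff_iter n d F u = 0) ->
  exists r p, 0 < r /\ poly_size_le n p /\ forall v, Rabs v < r -> F v = p v.
Proof.
  intros HC Heps Hrho Hcont Hdiff.
  set (r := Rmin (rho / 2) (eps / (2 * (1 + 2 * C)))).
  assert (Hr_rho : r <= rho / 2) by apply Rmin_l.
  assert (Hr_eps : r * (1 + 2 * C) < eps).
  { assert (Hr : r <= eps / (2 * (1 + 2 * C))) by apply Rmin_r.
    apply (Rmult_le_compat_r (1 + 2 * C)) in Hr; [|lra].
    replace (eps / (2 * (1 + 2 * C)) * (1 + 2 * C)) with (eps / 2) in Hr by (field; lra); lra. }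
  assert (Hr : 0 < r) by (apply Rmin_pos; [lra | apply Rdiv_lt_0_compat; lra]).
  destruct (fdiff_vanish_on_poly n F (- r) r) as [p [Hp Ep]]; [lra | | |].
  - intros v Hv; apply Hcont, Rabs_def1; lra.
  - intros d y Hd Hy Hyd; apply Hdiff.
    pose proof (pos_INR n); rewrite (Rabs_right d) by lra.
    assert (Hnd : 0 <= INR n * d) by nra.
    assert (Hy_abs : Rabs y <= r) by (apply Rabs_le; lra).
    assert (C * (INR n * d) <= C * (2 * r)) by (apply Rmult_le_compat_l; lra).
    nra.
  - exists r, p; split; [exact Hr|]; split; [exact Hp|].
    intros v Hv; apply Ep; apply Rabs_def2 in Hv; lra.
Qed.

Lemma balanced_ridge_identity f g h l1 x0 l2 eps :
  (forall s t, Rabs s < eps -> Rabs t < eps ->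
     sum_list (fun x => h x * f (x + s + t * g x)) (l1 ++ x0 :: l2) = 0) ->
  ridge_identity g (g x0) (l1 ++ l2) (fun v => h x0 * f (x0 + v)) (fun j v => h j * f (j + v)) eps.
Proof.
  intros Hbal s t Hs Ht; specialize (Hbal s t Hs Ht).
  rewrite sum_list_app in Hbal |- *; simpl in Hbal.
  rewrite !(sum_list_ext (fun x => h x * f (x + s + t * g x)) (fun j => h j * f (j + (s + t * g j))))
    in Hbal by (intros x; rewrite Rplus_assoc; reflexivity).
  rewrite Rplus_assoc in Hbal; lra.
Qed.

Lemma injective_on_split g l1 x0 l2 j :
  NoDup (l1 ++ x0 :: l2) -> injective_on (l1 ++ x0 :: l2) g ->
  In j (l1 ++ l2) -> g j <> g x0.
Proof.
  intros Hnd Hg Hj Egj; apply (NoDup_remove_2 _ _ _ Hnd).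
  rewrite <- (Hg j x0); [exact Hj | | apply in_elt | exact Egj].
  apply in_app_or in Hj as [|]; apply in_or_app; [left | right; right]; assumption.
Qed.

Lemma continuity_pt_translate f x0 v :
  continuity_pt f (x0 + v) -> continuity_pt (fun w => f (x0 + w)) v.
Proof.
  apply (continuity_pt_comp (fun w => x0 + w) f), derivable_continuous_pt.
  apply derivable_pt_plus; [apply derivable_pt_const | apply derivable_pt_id].
Qed.

Theorem mainTheorem4 (U : R -> Prop) (X : list R) (f g h : R -> R) (x0 : R) :
  open_set U ->
  NoDup X ->
  (1 <= length X)%nat ->
  (forall x, In x X -> U x) ->
  continuous_on U f ->
  injective_on X g ->
  balanced f g h X U ->
  In x0 X -> h x0 <> 0 ->
  exists (delta : R) (c : list R),
    0 < delta /\ (length c <= length X - 1)%nat /\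
    forall y, Rabs (y - x0) < delta -> U y /\ f y = poly_eval c y.
Proof.
  intros HU Hnd _ HXU Hf Hg [eps [Heps Hbal]] Hx0 Hh0.
  destruct (in_split _ _ Hx0) as [l1 [l2 ->]]; set (L := l1 ++ l2).
  destruct (ridge_identity_fdiff_iter g (g x0) L (fun j => injective_on_split g l1 x0 l2 j Hnd Hg))
    as [C [HC HC_diff]].
  set (F := fun v => f (x0 + v)).
  assert (HF_diff : forall d u, Rabs u + C * INR (length L) * Rabs d < eps ->
                      fdiff_iter (length L) d F u = 0).
  { intros d u Hu; apply (Rmult_eq_reg_l (h x0)); [|exact Hh0].
    rewrite Rmult_0_r, <- fdiff_iter_scale.
    exact (HC_diff _ _ eps (balanced_ridge_identity f g h l1 x0 l2 eps Hbal) d u Hu). }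
  destruct (HU x0 (HXU x0 Hx0)) as [del Hdel]; pose proof (cond_pos del) as Hdel_pos.
  assert (HU_near : forall y, Rabs (y - x0) < del -> U y) by (intros y Hy; apply Hdel, Hy).
  assert (HF_cont : forall v, Rabs v < del -> continuity_pt F v).
  { intros v Hv; apply continuity_pt_translate, Hf, HU_near.
    replace (x0 + v - x0) with v by ring; exact Hv. }
  destruct (fdiff_vanish_near0_poly _ F C eps del HC Heps Hdel_pos HF_cont HF_diff)
    as [r [p [Hr [Hp Ep]]]].
  destruct (poly_size_le_shift _ p (- x0) Hp) as [c [Hc Ec]].
  exists (Rmin r del), c; split; [apply Rmin_pos; assumption|]; split.
  - unfold L in Hc; rewrite length_app in Hc |- *; simpl; lia.
  - intros y Hy; pose proof (Rmin_l r del); pose proof (Rmin_r r del); split; [apply HU_near; lra|].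
    rewrite <- Ec; replace y with (x0 + (y - x0)) at 1 by ring; apply (Ep (y - x0)); lra.
Qed.
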